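(* For the LPE-BC with COF with $K\ge 2$ users and $Q\ge 1$ layers, every achievable rate tuple $(R_1,\dots,R_K)$ (and hence every point of the capacity region) satisfies $$\sum_{k=1}^{K}\omega_k R_k\;\le\;\sum_{q=1}^{Q}\max_{k\in\{1,\dots,K\}}\Big(\omega_{\pi(k)}\,\Pr\big[\max(N_{\pi(k)},N_{\pi(k+1)},\dots,N_{\pi(K)})\ge q\big]\Big)$$ for every weight vector $(\omega_1,\dots,\omega_K)\in\mathbb{R}_+^K$ and every permutation $\pi$ of $\{1,\dots,K\}$.
   Context: Layered packet erasure broadcast channel (LPE-BC) with channel output feedback (COF): fix integers $K$ (number of users) and $Q$ (number of layers) and a finite field $\mathcal{X}$. In each time slot $t$ the transmitter sends $X_t=(X_{1,t},\dots,X_{Q,t})\in\mathcal{X}^Q$. A random channel state $N_t=(N_{1,t},\dots,N_{K,t})\in\{0,1,\dots,Q\}^K$, i.i.d. across slots with an arbitrary fixed joint distribution of the components $(N_1,\dots,N_K)$ (components may be dependent), determines the output of user $k$: $Y_{k,t}=(X_{1,t},\dots,X_{N_{k,t},t})$ if $N_{k,t}>0$ and $Y_{k,t}=\mathsf{e}$ (a fixed erasure symbol) if $N_{k,t}=0$. A code of length $n$ with rates $(R_1,\dots,R_K)$ (measured in packets, i.e. field symbols, per slot) has independent uniform messages $W_k$ taking $|\mathcal{X}|^{nR_k}$ values; with feedback the encoder at time $t$ is $X_t=f_t(W_1,\dots,W_K,N_1,\dots,N_{t-1})$; receiver $k$ knows all states $N_1,\dots,N_n$ and decodes $\hat W_k=\mathrm{dec}_k(Y_k^n,N_1,\dots,N_n)$.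 The error probability is $\Pr[\exists k:\hat W_k\ne W_k]$; a rate tuple is achievable if there is a sequence of codes with error probability tending to $0$ as $n\to\infty$; the capacity region is the convex closure of the set of achievable rate tuples. *)

From HB Require Import structures.
From mathcomp Require Import all_boot all_order all_algebra all_fingroup all_field.
From mathcomp Require Import all_classical all_reals all_analysis.
Set Implicit Arguments. Unset Strict Implicit. Unset Printing Implicit Defensive.
Import Order.TTheory GRing.Theory Num.Theory.
Local Open Scope ring_scope.

Section LPEBC.
Variables (R : realType) (F : finFieldType) (K Q : nat).

Definition state := {ffun 'I_K -> 'I_Q.+1}.
Definition input := {ffun 'I_Q -> F}.
(* channel output of one user: layer q (0-based) is seen iff q < N_k;
   all-None = erasure symbol e (N_k = 0) *)
Definition output := {ffun 'I_Q -> option F}.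

Definition chan_out (x : input) (Nk : 'I_Q.+1) : output :=
  [ffun q : 'I_Q => if (q < Nk)%N then Some (x q) else None].

Definition msgs (M : 'I_K -> nat) := {dffun forall k : 'I_K, 'I_(M k)}.

Definition past n (t : 'I_n) (s : {ffun 'I_n -> state}) : {ffun 'I_t -> state} :=
  [ffun i : 'I_t => s (widen_ord (ltnW (ltn_ord t)) i)].

Record code (n : nat) (M : 'I_K -> nat) := Code {
  enc : forall t : 'I_n, msgs M -> {ffun 'I_t -> state} -> input;
  dec : forall k : 'I_K, {ffun 'I_n -> output} -> {ffun 'I_n -> state} -> 'I_(M k)
}.

Definition tx n M (c : code n M) (w : msgs M) (s : {ffun 'I_n -> state}) (t : 'I_n)
  : input := @enc n M c t w (past t s).

Definition rx n M (c : code n M) (w : msgs M) (s : {ffun 'I_n -> state}) (k : 'I_K)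
  : {ffun 'I_n -> output} := [ffun t => chan_out (tx c w s t) (s t k)].

Definition err_prob (P : state -> R) n M (c : code n M) : R :=
  \sum_(w : msgs M) \sum_(s : {ffun 'I_n -> state})
    ((\prod_(k < K) (M k)%:R)^-1 * (\prod_(t < n) P (s t)) *
     (if [exists k : 'I_K, @dec n M c k (rx c w s k) s != w k] then 1 else 0)).

Definition msize (n : nat) (r : R) : nat :=
  maxn 1 (Num.truncn (powR (#|F|%:R : R) (n%:R * r))).

Definition achievable (P : state -> R) (rate : 'I_K -> R) : Prop :=
  forall eps : R, 0 < eps -> exists N0 : nat, forall n : nat, (N0 <= n)%N ->
    exists c : code n (fun k => msize n (rate k)), err_prob P c <= eps.

Definition prob_tail_max (P : state -> R) (pi : {perm 'I_K}) (k : 'I_K) (q : nat) : R :=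
  \sum_(N : state | [exists j : 'I_K, (k <= j)%N && (q <= N (pi j))%N]) P N.

End LPEBC.

From Pilot Require Import Defs.
From HB Require Import structures.
From mathcomp Require Import all_boot all_order all_algebra all_fingroup all_field.
From mathcomp Require Import all_classical all_reals all_analysis.
From mathcomp Require Import ring lra.
Import Order.TTheory GRing.Theory Num.Theory.
Local Open Scope ring_scope.
Set Implicit Arguments. Unset Strict Implicit. Unset Printing Implicit Defensive.

(* Order the users by [pi] and give virtual receiver [j] all states and, at each
   time, the layers below max (N_{pi j}, ..., N_{pi (K-1)}): it is degraded with
   respect to the real receivers [pi j], ..., [pi (K-1)].  Let V_j be the messages of
   these users.  By Fano, I(W_{pi j}; obs_j | V_{j+1}) >= (1 - P_e) n R_{pi j} ln|X| - O(1).
   By the chain rule over times and layers, and because the current state is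
   independent of the past, the same quantity equals
   sum_t sum_q Pr[layer q visible to j] (A(j, j+1) - A(j, j)), with
   A(j, m) = H(X_{t,q} | X_{t,<q}, obs_j before t, V_m) in [0, ln|X|] and monotone in
   both indices.  After weighting by omega, A(j, j+1) <= A(j+1, j+1) makes the sum over
   j telescope to at most n ln|X| sum_q max_j omega_{pi j} Pr[...]; divide by n and let
   the error probability vanish. *)

(** * Conditional entropy on a finite weighted space *)

Lemma ln_le_subr1 (R : realType) (y : R) : 0 < y -> ln y <= y - 1.
Proof.
move=> y0; have := @le_ln1Dx R (y - 1); rewrite addrCA subrr addr0; apply.
by rewrite ltrBrDr addNr.
Qed.

Lemma ln_ge_subV (R : realType) (y : R) : 0 < y -> 1 - y^-1 <= ln y.
Proof.
move=> y0; have := @ln_le_subr1 R y^-1; rewrite invr_gt0 => /(_ y0).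
by rewrite lnV ?posrE // lerNl opprB.
Qed.

Section ConditionalEntropy.
Variables (R : realType) (T : finType) (mu : T -> R).
Hypothesis mu0 : forall x, 0 <= mu x.

Definition fibre_mass (B : eqType) (g : T -> B) (x : T) : R := \sum_(y | g y == g x) mu y.
Definition pairf (A B : Type) (f : T -> A) (g : T -> B) : T -> A * B := fun x => (f x, g x).

(* H(f | g) in nats; [fibre_mass g x] plays the role of P[g = g x]. *)
Definition centropy (A B : eqType) (f : T -> A) (g : T -> B) : R :=
  \sum_x mu x * ln (fibre_mass g x / fibre_mass (pairf f g) x).

Lemma mu_eq0_or_gt0 x : mu x = 0 \/ 0 < mu x.
Proof. by have := mu0 x; rewrite le0r => /orP [/eqP ->|]; [left|right]. Qed.

Lemma fibre_massE (B : eqType) (g : T -> B) x :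
  fibre_mass g x = \sum_y mu y * (g y == g x)%:R.
Proof.
by rewrite /fibre_mass big_mkcond; apply: eq_bigr => y _; case: ifP; rewrite ?mulr1 ?mulr0.
Qed.

Lemma fibre_mass_ge (B : eqType) (g : T -> B) x : mu x <= fibre_mass g x.
Proof. by rewrite /fibre_mass (bigD1 x) //= lerDl sumr_ge0. Qed.

Lemma fibre_mass_ge0 (B : eqType) (g : T -> B) x : 0 <= fibre_mass g x.
Proof. exact: le_trans (mu0 x) (fibre_mass_ge g x). Qed.

Lemma fibre_mass_gt0 (B : eqType) (g : T -> B) x : 0 < mu x -> 0 < fibre_mass g x.
Proof. by move=> h; apply: lt_le_trans h (fibre_mass_ge g x). Qed.

Lemma eq_fibre_mass (B B' : eqType) (g : T -> B) (g' : T -> B') x :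
  (forall y, (g y == g x) = (g' y == g' x)) -> fibre_mass g x = fibre_mass g' x.
Proof. by move=> h; apply: eq_bigl. Qed.

Lemma fibre_mass_le (B B' : eqType) (g : T -> B) (h : T -> B') x :
  (forall y, g y == g x -> h y == h x) -> fibre_mass g x <= fibre_mass h x.
Proof.
move=> gh; rewrite /fibre_mass [X in X <= _]big_mkcond [X in _ <= X]big_mkcond /=.
by apply: ler_sum => y _; case: ifP => [/gh -> //|_]; case: ifP.
Qed.

Lemma sum_div_le1 (P : pred T) (c : R) :
  \sum_(x | P x) mu x <= c -> \sum_(x | P x) (mu x / c) <= 1.
Proof.
move=> hc; rewrite -mulr_suml.
have s0 : 0 <= \sum_(x | P x) mu x by apply: sumr_ge0.
have [->|c0] := eqVneq c 0; first by rewrite invr0 mulr0.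
have cp : 0 < c by rewrite lt_def c0 (le_trans s0 hc).
by rewrite ler_pdivrMr // mul1r.
Qed.

Lemma centropy_ge0 (A B : eqType) (f : T -> A) (g : T -> B) : 0 <= centropy f g.
Proof.
apply: sumr_ge0 => x _; have [->|mp] := mu_eq0_or_gt0 x; first by rewrite mul0r.
apply: mulr_ge0 => //; apply: ln_ge0.
rewrite ler_pdivlMr ?mul1r; last exact: fibre_mass_gt0.
by apply: fibre_mass_le => y; rewrite /pairf xpair_eqE => /andP [].
Qed.

Lemma centropy_chain (A1 A2 B : eqType) (f1 : T -> A1) (f2 : T -> A2) (g : T -> B) :
  centropy (pairf f1 f2) g = centropy f2 g + centropy f1 (pairf f2 g).
Proof.
rewrite /centropy -big_split /=; apply: eq_bigr => x _; rewrite -mulrDr.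
have [->|mp] := mu_eq0_or_gt0 x; first by rewrite !mul0r.
congr (_ * _).
have -> : fibre_mass (pairf (pairf f1 f2) g) x = fibre_mass (pairf f1 (pairf f2 g)) x.
  by apply: eq_fibre_mass => y; rewrite /pairf !xpair_eqE andbA.
have ha := fibre_mass_gt0 g mp; have hb := fibre_mass_gt0 (pairf f2 g) mp.
have hc := fibre_mass_gt0 (pairf f1 (pairf f2 g)) mp.
rewrite -lnM ?posrE ?divr_gt0 //; congr ln.
by rewrite mulrA divfK // gt_eqF.
Qed.

Lemma eq_centropy (A B A' B' : eqType)
    (f : T -> A) (g : T -> B) (f' : T -> A') (g' : T -> B') :
  (forall x y, (g y == g x) = (g' y == g' x)) ->
  (forall x y, (f y == f x) && (g y == g x) = (f' y == f' x) && (g' y == g' x)) ->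
  centropy f g = centropy f' g'.
Proof.
move=> h1 h2; apply: eq_bigr => x _; rewrite (eq_fibre_mass (h1 x)).
by rewrite (@eq_fibre_mass _ _ (pairf f g) (pairf f' g')) // => y; rewrite !xpair_eqE h2.
Qed.

Lemma centropy_eq0 (A B : eqType) (f : T -> A) (g : T -> B) :
  (forall x y, g x = g y -> f x = f y) -> centropy f g = 0.
Proof.
move=> fg; apply: big1 => x _; have [->|mp] := mu_eq0_or_gt0 x; first by rewrite mul0r.
have -> : fibre_mass (pairf f g) x = fibre_mass g x.
  apply: eq_fibre_mass => y; rewrite /pairf xpair_eqE.
  by case: (g y =P g x) => [/fg ->|]; rewrite ?eqxx ?andbF.
by rewrite divff ?ln1 ?mulr0 // gt_eqF // fibre_mass_gt0.
Qed.

Lemma fibre_mass_le_card (A : finType) (B : eqType) (f : T -> A) (g : T -> B) y :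
  \sum_x mu x * (g y == g x)%:R / fibre_mass (pairf f g) x <= #|A|%:R.
Proof.
have -> : #|A|%:R = \sum_(a : A) (1 : R) by rewrite sumr_const.
rewrite (partition_big f xpredT) //=; apply: ler_sum => a _.
pose c := \sum_(x | (f x == a) && (g x == g y)) mu x.
rewrite (bigID (fun x => g x == g y)) /= [X in _ + X]big1 ?addr0; last first.
  by move=> x /andP [_ ne]; rewrite eq_sym (negbTE ne) mulr0 mul0r.
have -> : \sum_(x | (f x == a) && (g x == g y)) mu x * (g y == g x)%:R / fibre_mass (pairf f g) x
       = \sum_(x | (f x == a) && (g x == g y)) mu x / c.
  apply: eq_bigr => x /andP [/eqP fa /eqP gy]; rewrite gy eqxx mulr1; congr (_ / _).
  by apply: eq_bigl => w; rewrite /pairf xpair_eqE fa gy.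
exact: sum_div_le1.
Qed.

Lemma sum_fibre_ratio_le_card (A : finType) (B : eqType) (f : T -> A) (g : T -> B)
    (S : pred T) :
  (forall x y, g x = g y -> S x = S y) ->
  \sum_(x | S x) mu x * (fibre_mass g x / fibre_mass (pairf f g) x)
    <= #|A|%:R * \sum_(x | S x) mu x.
Proof.
move=> gS.
have -> : \sum_(x | S x) mu x * (fibre_mass g x / fibre_mass (pairf f g) x)
   = \sum_y mu y * \sum_(x | S x) mu x * (g y == g x)%:R / fibre_mass (pairf f g) x.
  transitivity (\sum_(x | S x) \sum_y mu y * (mu x * (g y == g x)%:R / fibre_mass (pairf f g) x)).
    apply: eq_bigr => x _; rewrite (fibre_massE g) !big_distrl /= big_distrr /=.
    by apply: eq_bigr => y _; ring.
  by rewrite exchange_big /=; apply: eq_bigr => y _; rewrite big_distrr.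
rewrite big_distrr /= [X in _ <= X]big_mkcond /=; apply: ler_sum => y _.
case Sy: (S y) => /=; last first.
  rewrite big1 ?mulr0 // => x Sx; case: eqP => [gyx|]; last by rewrite mulr0 mul0r.
  by move: Sx; rewrite -(gS _ _ gyx) Sy.
rewrite [X in _ <= X]mulrC; apply: (ler_wpM2l (mu0 y)).
apply: le_trans (fibre_mass_le_card f g y).
rewrite [X in _ <= X](bigID S) /= lerDl; apply: sumr_ge0 => x _.
by rewrite !mulr_ge0 ?invr_ge0 ?fibre_mass_ge0.
Qed.

Lemma partial_centropy_le_ln_card (A : finType) (B : eqType) (f : T -> A) (g : T -> B)
    (S : pred T) :
  (forall x y, g x = g y -> S x = S y) ->
  \sum_(x | S x) mu x * ln (fibre_mass g x / fibre_mass (pairf f g) x)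
    <= (\sum_(x | S x) mu x) * ln #|A|%:R.
Proof.
move=> gS; set N : R := #|A|%:R.
(* [ln y <= y - 1] at [y = ratio / N] *)
have step x : S x -> mu x * ln (fibre_mass g x / fibre_mass (pairf f g) x)
    <= N^-1 * (mu x * (fibre_mass g x / fibre_mass (pairf f g) x)) - mu x + mu x * ln N.
  move=> _; have [->|mp] := mu_eq0_or_gt0 x; first by rewrite !mul0r !mulr0 subrr add0r.
  have Np : 0 < N by rewrite ltr0n; apply/card_gt0P; exists (f x).
  have ha := fibre_mass_gt0 g mp; have hb := fibre_mass_gt0 (pairf f g) mp.
  set a := fibre_mass g x in ha *; set b := fibre_mass (pairf f g) x in hb *.
  have -> : ln (a / b) = ln (N^-1 * (a / b)) + ln N.
    rewrite -lnM ?posrE ?mulr_gt0 ?invr_gt0 ?divr_gt0 //; congr ln.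
    by rewrite mulrAC mulVf ?mul1r // gt_eqF.
  have := @ln_le_subr1 _ (N^-1 * (a / b)); rewrite mulr_gt0 ?invr_gt0 ?divr_gt0 // => /(_ isT) h.
  rewrite mulrDr lerD2r [X in _ <= X - _]mulrCA -[X in _ <= _ - X]mulr1 -mulrBr.
  by apply: ler_wpM2l; [exact: ltW | exact: h].
apply: le_trans (ler_sum _ step) _.
rewrite big_split /= sumrB -big_distrl /= -big_distrr /= -[X in _ <= X]add0r lerD2r subr_le0.
have card_bound := sum_fibre_ratio_le_card f gS; rewrite -/N in card_bound.
have [N0|Nn0] := eqVneq N 0; first by rewrite N0 invr0 mul0r sumr_ge0.
have Np : 0 < N by rewrite lt_def Nn0 ler0n.
by rewrite mulrC ler_pdivrMr // mulrC.
Qed.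

Lemma centropy_le_ln_card (A : finType) (B : eqType) (f : T -> A) (g : T -> B) :
  centropy f g <= (\sum_x mu x) * ln #|A|%:R.
Proof. exact: partial_centropy_le_ln_card. Qed.

Section ConditioningReducesEntropy.
Variables (A B C : eqType) (f : T -> A) (g : T -> B) (h : T -> C).
Local Notation fh := (pairf f h).
Local Notation gh := (pairf g h).
Local Notation fgh := (pairf f (pairf g h)).

Lemma sum_fibre_ratio_le y z :
  \sum_x mu x * (fh y == fh x)%:R * (gh z == gh x)%:R / (fibre_mass h x * fibre_mass fgh x)
  <= (h z == h y)%:R / fibre_mass h y.
Proof.
have [hzy|nhzy] := eqVneq (h z) (h y); last first.
  rewrite mul0r big1 // => x _.
  case E: (fh y == fh x); case E': (gh z == gh x); rewrite ?mulr0 ?mul0r //.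
  move: E E'; rewrite /pairf !xpair_eqE => /andP [_ /eqP a] /andP [_ /eqP b].
  by move: nhzy; rewrite a b eqxx.
pose same x := (f x == f y) && (g x == g z) && (h x == h y).
pose c := \sum_(x | same x) mu x.
rewrite mul1r (bigID same) /= [X in _ + X]big1 ?addr0; last first.
  move=> x nsame; case E: (fh y == fh x); case E': (gh z == gh x); rewrite ?mulr0 ?mul0r //.
  move: E E' nsame; rewrite /pairf /same !xpair_eqE.
  move=> /andP [/eqP fx /eqP hx] /andP [/eqP gx /eqP hx'].
  by rewrite fx gx hx !eqxx.
have -> : \sum_(x | same x) mu x * (fh y == fh x)%:R * (gh z == gh x)%:R
            / (fibre_mass h x * fibre_mass fgh x)
          = (fibre_mass h y)^-1 * \sum_(x | same x) mu x / c.
  rewrite big_distrr /=; apply: eq_bigr => x /andP [/andP [/eqP fx /eqP gx] /eqP hx].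
  rewrite /pairf fx gx hx hzy !eqxx !mulr1.
  have -> : fibre_mass h x = fibre_mass h y by rewrite /fibre_mass hx.
  have -> : fibre_mass fgh x = c.
    by apply: eq_bigl => w; rewrite /pairf /same !xpair_eqE fx gx hx andbA.
  by rewrite invfM; ring.
rewrite -[X in _ <= X]mulr1; apply: ler_wpM2l; first by rewrite invr_ge0 fibre_mass_ge0.
exact: sum_div_le1.
Qed.

Lemma sum_likelihood_ratio_le :
  \sum_x mu x * (fibre_mass fh x * fibre_mass gh x / (fibre_mass h x * fibre_mass fgh x))
  <= \sum_x mu x.
Proof.
pose G x y z := mu y * mu z * (mu x * (fh y == fh x)%:R * (gh z == gh x)%:R
                                  / (fibre_mass h x * fibre_mass fgh x)).
have expand x : mu x * (fibre_mass fh x * fibre_mass gh x / (fibre_mass h x * fibre_mass fgh x))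
    = \sum_y \sum_z G x y z.
  rewrite (fibre_massE fh) (fibre_massE gh) big_distrl /= big_distrl /= big_distrr /=.
  apply: eq_bigr => y _; rewrite big_distrr /= big_distrl /= big_distrr /=.
  by apply: eq_bigr => z _; rewrite /G; ring.
under eq_bigr do rewrite expand.
rewrite exchange_big /=; under eq_bigr do rewrite exchange_big /=.
apply: le_trans (_ : \sum_y \sum_z mu y * mu z * ((h z == h y)%:R / fibre_mass h y) <= _).
  apply: ler_sum => y _; apply: ler_sum => z _; rewrite /G -big_distrr /=.
  by apply: ler_wpM2l; [exact: mulr_ge0 | exact: sum_fibre_ratio_le].
apply: ler_sum => y _.
have -> : \sum_z mu y * mu z * ((h z == h y)%:R / fibre_mass h y)
          = mu y * (fibre_mass h y / fibre_mass h y).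
  by rewrite fibre_massE !big_distrl /= big_distrr /=; apply: eq_bigr => z _; ring.
have [->|m0] := eqVneq (fibre_mass h y) 0; first by rewrite mul0r mulr0.
by rewrite divff // mulr1.
Qed.

Lemma centropy_pair_le : centropy f gh <= centropy f h.
Proof.
rewrite -subr_ge0 /centropy -sumrB.
(* [1 - 1/y <= ln y] bounds each term from below by [mu x] minus a likelihood ratio. *)
have step x : mu x - mu x * (fibre_mass fh x * fibre_mass gh x
                              / (fibre_mass h x * fibre_mass fgh x))
   <= mu x * ln (fibre_mass h x / fibre_mass fh x)
      - mu x * ln (fibre_mass gh x / fibre_mass fgh x).
  have [->|mp] := mu_eq0_or_gt0 x; first by rewrite !mul0r subrr.
  have ha := fibre_mass_gt0 h mp; have hb := fibre_mass_gt0 fh mp.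
  have hc := fibre_mass_gt0 gh mp; have hd := fibre_mass_gt0 fgh mp.
  set a := fibre_mass h x in ha *; set b := fibre_mass fh x in hb *.
  set c := fibre_mass gh x in hc *; set d := fibre_mass fgh x in hd *.
  rewrite -mulrBr -[X in X - _]mulr1 -mulrBr; apply: ler_wpM2l; first exact: ltW.
  rewrite -ln_div ?posrE ?divr_gt0 //.
  have -> : b * c / (a * d) = (a / b / (c / d))^-1 by rewrite invf_div; field; rewrite !gt_eqF.
  by apply: ln_ge_subV; rewrite !divr_gt0.
apply: le_trans (ler_sum _ (fun x _ => step x)).
by rewrite sumrB subr_ge0; exact: sum_likelihood_ratio_le.
Qed.

End ConditioningReducesEntropy.

Lemma centropy_le_coarser (A B C : eqType) (f : T -> A) (g : T -> B) (h : T -> C) :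
  (forall x y, g x = g y -> h x = h y) -> centropy f g <= centropy f h.
Proof.
move=> gh; apply: le_trans (centropy_pair_le f g h); rewrite le_eqVlt; apply/orP; left.
apply/eqP; apply: eq_centropy => x y; rewrite /pairf xpair_eqE;
  by case: (g y =P g x) => [/gh ->|]; rewrite ?eqxx ?andbF.
Qed.

End ConditionalEntropy.

(** * Independence through measure-preserving swaps *)

Section IndependentSymmetry.
Variables (R : realType) (T : finType) (mu : T -> R).
Hypothesis mu0 : forall x, 0 <= mu x.
Variables (D : finType) (C : eqType) (s : T -> D) (u : T -> C) (rho : D -> R).
Hypothesis rho_sum : \sum_a rho a = 1.
(* [s] is independent of [u] with law [rho]: the bijections [tau a b] move the
   event [s = a] onto [s = b], preserve [u], and rescale [mu] by [rho b / rho a]. *)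
Variable tau : D -> D -> T -> T.
Hypothesis tau_inj : forall a b, injective (tau a b).
Hypothesis tau_s : forall a b x, (s (tau a b x) == b) = (s x == a).
Hypothesis tau_u : forall a b x, u (tau a b x) = u x.
Hypothesis tau_mu : forall a b x, s x = a -> rho a * mu (tau a b x) = rho b * mu x.

Definition u_measurable (B : eqType) (h : T -> B) := forall x y, u x = u y -> h x = h y.

Lemma u_measurable_fibre_mass (B : eqType) (h : T -> B) :
  u_measurable h -> u_measurable (fibre_mass mu h).
Proof. by move=> hh x y /hh e; rewrite /fibre_mass e. Qed.

Lemma u_measurable_pairf (B B' : eqType) (f : T -> B) (h : T -> B') :
  u_measurable f -> u_measurable h -> u_measurable (pairf f h).
Proof. by move=> hf hh x y e; rewrite /pairf (hf _ _ e) (hh _ _ e). Qed.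

Lemma sum_indep (G : T -> R) : u_measurable G ->
  forall a, \sum_x mu x * G x * (s x == a)%:R = rho a * \sum_x mu x * G x.
Proof.
move=> hG a.
have swap b : rho a * \sum_x mu x * G x * (s x == b)%:R
              = rho b * \sum_x mu x * G x * (s x == a)%:R.
  rewrite (reindex_inj (@tau_inj a b)) /= !big_distrr /=.
  apply: eq_bigr => x _; rewrite tau_s (hG _ _ (tau_u a b x)).
  case: (eqVneq (s x) a) => [sa|]; last by rewrite !mulr0.
  by rewrite !mulr1 !mulrA tau_mu.
have : \sum_b rho a * (\sum_x mu x * G x * (s x == b)%:R)
       = \sum_b rho b * (\sum_x mu x * G x * (s x == a)%:R).
  by apply: eq_bigr => b _; exact: swap.
rewrite -big_distrr /= -big_distrl /= rho_sum mul1r => <-.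
congr (_ * _); rewrite exchange_big /=; apply: eq_bigr => x _.
rewrite -big_distrr /= (bigD1 (s x)) //= eqxx big1 ?addr0 ?mulr1 //.
by move=> b /negbTE; rewrite eq_sym => ->.
Qed.

Lemma fibre_mass_indep (B : eqType) (h : T -> B) : u_measurable h ->
  forall x, fibre_mass mu (pairf s h) x = rho (s x) * fibre_mass mu h x.
Proof.
move=> hh x; rewrite !fibre_massE -(sum_indep (G := fun y => (h y == h x)%:R)).
  apply: eq_bigr => y _; rewrite /pairf xpair_eqE.
  by case: (s y == s x); case: (h y == h x); rewrite ?mulr1 ?mulr0.
by move=> y z /hh ->.
Qed.

Lemma centropy_indep (B : eqType) (h : T -> B) : u_measurable h ->
  centropy mu s h = \sum_x mu x * ln (rho (s x))^-1.
Proof.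
move=> hh; apply: eq_bigr => x _.
have [->|mp] := mu_eq0_or_gt0 mu0 x; first by rewrite !mul0r.
by rewrite fibre_mass_indep // invfM mulrCA divff ?mulr1 // gt_eqF // fibre_mass_gt0.
Qed.

(* An erasure: [y] shows [f] exactly on the event [phi s] and nothing otherwise. *)
Lemma centropy_erasure (B B' B'' B''' : eqType) (y : T -> B) (g : T -> B')
    (f : T -> B'') (h : T -> B''') (phi : pred D) :
  u_measurable f -> u_measurable h ->
  (forall x, ~~ phi (s x) -> forall z, g z = g x -> y z = y x) ->
  (forall x, phi (s x) -> forall z, (g z == g x) = (s z == s x) && (h z == h x)) ->
  (forall x, phi (s x) -> forall z,
      (y z == y x) && (g z == g x) = (s z == s x) && ((f z == f x) && (h z == h x))) ->
  centropy mu y g = (\sum_(a | phi a) rho a) * centropy mu f h.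
Proof.
move=> hf hh erased g_shown yg_shown.
pose L x := ln (fibre_mass mu h x / fibre_mass mu (pairf f h) x).
have uL : u_measurable L.
  move=> x z e; rewrite /L (u_measurable_fibre_mass hh e).
  by rewrite (u_measurable_fibre_mass (u_measurable_pairf hf hh) e).
have term x : mu x * ln (fibre_mass mu g x / fibre_mass mu (pairf y g) x)
              = mu x * L x * (phi (s x))%:R.
  have [->|mp] := mu_eq0_or_gt0 mu0 x; first by rewrite !mul0r.
  case P: (phi (s x)); last first.
    rewrite mulr0 (_ : fibre_mass mu (pairf y g) x = fibre_mass mu g x).
      by rewrite divff ?ln1 ?mulr0 ?gt_eqF ?fibre_mass_gt0.
    apply: eq_fibre_mass => z; rewrite /pairf xpair_eqE.
    by case: (g z =P g x) => [/(erased x (negbT P)) ->|]; rewrite ?eqxx ?andbF.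
  rewrite mulr1 /L.
  have -> : fibre_mass mu g x = fibre_mass mu (pairf s h) x.
    by apply: eq_fibre_mass => z; rewrite g_shown // /pairf xpair_eqE.
  have -> : fibre_mass mu (pairf y g) x = fibre_mass mu (pairf s (pairf f h)) x.
    by apply: eq_fibre_mass => z; rewrite /pairf !xpair_eqE yg_shown.
  rewrite !fibre_mass_indep //; last exact: u_measurable_pairf.
  have rp : rho (s x) != 0.
    apply/negP => /eqP r0; have := fibre_mass_gt0 mu0 (pairf s h) mp.
    by rewrite fibre_mass_indep // r0 mul0r ltxx.
  by rewrite invfM mulrACA divff ?mul1r.
rewrite /centropy (eq_bigr _ (fun x _ => term x)).
have -> : \sum_x mu x * L x * (phi (s x))%:R
        = \sum_(a | phi a) \sum_x mu x * L x * (s x == a)%:R.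
  rewrite exchange_big /=; apply: eq_bigr => x _; rewrite -big_distrr /=.
  congr (_ * _); case P: (phi (s x)).
    rewrite (bigD1 (s x)) //= eqxx big1 ?addr0 //.
    by move=> b /andP [_ /negbTE]; rewrite eq_sym => ->.
  by rewrite big1 // => b pb; case: eqP => // e; move: P; rewrite e pb.
by rewrite big_distrl /=; apply: eq_bigr => a _; rewrite sum_indep.
Qed.

End IndependentSymmetry.

Section PrefixChainRule.
Variables (R : realType) (T : finType) (mu : T -> R).
Hypothesis mu0 : forall x, 0 <= mu x.
Variables (n : nat) (B : eqType) (e : 'I_n -> T -> B).

Definition prefix (m : nat) (x : T) : {ffun 'I_n -> option B} :=
  [ffun i : 'I_n => if (i < m)%N then Some (e i x) else None].

Lemma prefix_eqE m y x :
  (prefix m y == prefix m x) = [forall i : 'I_n, (i < m)%N ==> (e i y == e i x)].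
Proof.
apply/eqP/forallP => [E i|E].
  apply/implyP => him; move/ffunP/(_ i): E; rewrite !ffunE him.
  by move=> [->].
apply/ffunP => i; rewrite !ffunE; case: ifP => // him.
by have := E i; rewrite him => /eqP ->.
Qed.

Lemma centropy_prefix (C : eqType) (g : T -> C) m : (m <= n)%N ->
  centropy mu (prefix m) g = \sum_(i < n | (i < m)%N) centropy mu (e i) (pairf (prefix i) g).
Proof.
elim: m => [_|m IH lt_mn].
  by rewrite big_pred0 ?centropy_eq0 // => x y _; apply/ffunP => i; rewrite !ffunE.
pose i0 := Ordinal lt_mn.
have -> : centropy mu (prefix m.+1) g = centropy mu (pairf (e i0) (prefix m)) g.
  apply: eq_centropy => // x y; rewrite /pairf xpair_eqE; congr (_ && _).
  rewrite !prefix_eqE; apply/forallP/andP => [E|[E1 /forallP E2] i].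
    split; first by have := E i0; rewrite ltnSn.
    apply/forallP => i; apply/implyP => him; have := E i.
    by rewrite ltnS (ltnW him).
  apply/implyP; rewrite ltnS leq_eqVlt => /orP [/eqP hi|hi].
    by have -> : i = i0 by apply: val_inj.
  by have := E2 i; rewrite hi.
rewrite (centropy_chain mu0) IH ?(ltnW lt_mn) // addrC [RHS](bigD1 i0) //=.
congr (_ + _); apply: eq_bigl => i; apply/idP/andP => [him|[h1 h2]].
  split; first by rewrite ltnS ltnW.
  by apply/eqP => E; move: him; rewrite E /= ltnn.
rewrite ltnS leq_eqVlt in h1; case/orP: h1 => // /eqP hi.
by move: h2; rewrite (_ : i = i0) ?eqxx //; apply: val_inj.
Qed.

End PrefixChainRule.

(** * Virtual receivers of the layered erasure broadcast channel *)

Lemma tperm_eqR (T : finType) (a b v : T) : (tperm a b v == b) = (v == a).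
Proof. by rewrite -[X in _ == X](tpermL a b) (inj_eq perm_inj). Qed.

(* The increments [b j - a j] are dominated by the increments of the telescoping
   sequence [0, b 0, b 1, ...], whose total is at most [L]. *)
Lemma weighted_increments_le_bigmax (R : realType) (k : nat) (w : 'I_k -> R)
    (a b : nat -> R) (L : R) :
  (forall j, 0 <= w j) -> 0 <= L -> 0 <= a 0%N -> 0 <= b 0%N ->
  (forall j, b j <= b j.+1) -> (forall j, b j <= a j.+1) -> (forall j, b j <= L) ->
  \sum_(j < k) w j * (b j - a j) <= (\big[Num.max/0]_(j < k) w j) * L.
Proof.
move=> w0 L0 a0 b0 b_incr ba bL; set mx := \big[Num.max/0]_(j < k) w j.
pose b' (j : nat) := if j is j'.+1 then b j' else 0.
have b'a j : b' j <= a j by case: j.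
have b'b j : 0 <= b j - b' j by case: j => [|j]; rewrite subr_ge0 //= ?subr0.
apply: le_trans (_ : \sum_(j < k) w j * (b j - b' j) <= _).
  by apply: ler_sum => j _; apply: ler_wpM2l => //; exact: lerB.
apply: le_trans (_ : \sum_(j < k) mx * (b j - b' j) <= _).
  by apply: ler_sum => j _; apply: ler_wpM2r => //; exact: le_bigmax.
rewrite -big_distrr /=.
have -> : \sum_(j < k) (b j - b' j) = b' k.
  by rewrite -(big_mkord xpredT (fun j => b' j.+1 - b' j)) telescope_sumr // subr0.
by apply: ler_wpM2l; [exact: bigmax_ge_id | case: (k)].
Qed.

Section Channel.
Variables (R : realType) (F : finFieldType) (K Q : nat) (P : state K Q -> R).
Hypothesis hP0 : forall N, 0 <= P N.
Hypothesis hP1 : \sum_N P N = 1.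
Variable pi : {perm 'I_K}.
Variables (n : nat) (M : 'I_K -> nat) (c : Defs.code F Q n M).
Hypothesis M_gt0 : forall k, (0 < M k)%N.

Definition outcome := (msgs M * {ffun 'I_n -> state K Q})%type.
Definition mu (x : outcome) : R := (\prod_k (M k)%:R)^-1 * \prod_t P (x.2 t).

Lemma mu_ge0 x : 0 <= mu x.
Proof.
apply: mulr_ge0; last exact: prodr_ge0.
by rewrite invr_ge0; apply: prodr_ge0 => k _; rewrite ler0n.
Qed.

Lemma mu_sum : \sum_x mu x = 1.
Proof.
rewrite -(pair_bigA _ (fun w s => mu (w, s))) /=.
have sum_states (w : msgs M) : \sum_(s : {ffun 'I_n -> state K Q}) mu (w, s)
                               = (\prod_k (M k)%:R)^-1.
  rewrite /mu /= -big_distrr /=.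
  rewrite -(bigA_distr_bigA (fun (_ : 'I_n) (N : state K Q) => P N)) /=.
  by rewrite [X in _ * X]big1 ?mulr1 // => t _; exact: hP1.
rewrite (eq_bigr _ (fun w _ => sum_states w)) sumr_const card_dep_ffun foldrE.
rewrite big_map big_enum /= -mulr_natl natr_prod.
under eq_bigr do rewrite card_ord.
by rewrite mulfV //; apply/prodf_neq0 => k _; rewrite pnatr_eq0 -lt0n M_gt0.
Qed.

Lemma err_probE : err_prob P c =
  \sum_x mu x * ([exists k, dec c k (rx c x.1 x.2 k) x.2 != x.1 k])%:R.
Proof.
by rewrite /err_prob pair_bigA /=; apply: eq_bigr => -[w s] _; rewrite /mu /=; case: ifP.
Qed.

Definition tail_max (j : nat) (N : state K Q) : nat :=
  \max_(i : 'I_K | (j <= i)%N) (N (pi i) : nat).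

Lemma tail_max_ge j (N : state K Q) (k : 'I_K) : (j <= k)%N -> (N (pi k) <= tail_max j N)%N.
Proof. exact: (@leq_bigmax_cond _ _ (fun i : 'I_K => (N (pi i) : nat))). Qed.

Lemma tail_max_gt j (q : nat) (N : state K Q) :
  (q < tail_max j N)%N = [exists i : 'I_K, (j <= i)%N && (q < N (pi i))%N].
Proof.
apply/idP/idP => [lt_q|/existsP [i /andP [ji qi]]]; last exact: leq_trans qi (tail_max_ge N ji).
apply: contraTT lt_q => /existsPn all_le; rewrite -leqNgt.
by apply/bigmax_leqP => i ji; move: (all_le i); rewrite ji /= -leqNgt.
Qed.

Lemma le_tail_max j j' (N : state K Q) : (j <= j')%N -> (tail_max j' N <= tail_max j N)%N.
Proof. by move=> jj'; apply/bigmax_leqP => i ji; apply: tail_max_ge (leq_trans jj' ji). Qed.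

Definition xsym (x : outcome) (t : 'I_n) : input F Q := tx c x.1 x.2 t.
Definition eout (j : nat) (x : outcome) (t : 'I_n) : output F Q :=
  [ffun q : 'I_Q => if (q < tail_max j (x.2 t))%N then Some (xsym x t q) else None].
Definition eobs (j : nat) (t : 'I_n) : outcome -> output F Q * state K Q :=
  pairf (fun x => eout j x t) (fun x => x.2 t).
Definition eobs_upto (j m : nat) := prefix (eobs j) m.
Definition msgs_from (m : nat) (x : outcome) : {ffun 'I_K -> nat} :=
  [ffun k : 'I_K => if (m <= k)%N then val (x.1 (pi k)) else 0%N].
Definition history (t : 'I_n) (x : outcome) :=
  (x.1, [ffun i : 'I_n => if (i < t)%N then Some (x.2 i) else None]).
Definition layer_out j t (q : 'I_Q) (x : outcome) := eout j x t q.
Definition layer_in t (q : 'I_Q) (x : outcome) := xsym x t q.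
Definition state_at (t : 'I_n) (x : outcome) := x.2 t.

Lemma history_eq (t : 'I_n) (x y : outcome) : history t x = history t y ->
  x.1 = y.1 /\ forall i : 'I_n, (i < t)%N -> x.2 i = y.2 i.
Proof.
case=> e1 /ffunP e2; split => // i it.
by have := e2 i; rewrite !ffunE it => -[].
Qed.

Lemma xsym_history (t : 'I_n) (x y : outcome) (i : 'I_n) :
  (i <= t)%N -> history t x = history t y -> xsym x i = xsym y i.
Proof.
move=> it /history_eq [e1 e2]; rewrite /xsym /tx e1; congr (enc c _ _).
by apply/ffunP => k; rewrite !ffunE; apply: e2; exact: leq_trans (ltn_ord k) it.
Qed.

Lemma eout_history j (t : 'I_n) (x y : outcome) (i : 'I_n) :
  (i < t)%N -> history t x = history t y -> eout j x i = eout j y i.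
Proof.
move=> it hxy; have [_ e2] := history_eq hxy.
by apply/ffunP => q; rewrite !ffunE (e2 _ it) (xsym_history (ltnW it) hxy).
Qed.

Lemma eobs_upto_history j (t : 'I_n) (x y : outcome) :
  history t x = history t y -> eobs_upto j t x = eobs_upto j t y.
Proof.
move=> hxy; have [_ e2] := history_eq hxy; apply/ffunP => i; rewrite !ffunE.
by case: ifP => // it; rewrite /eobs /pairf (e2 _ it) (eout_history j it hxy).
Qed.

Lemma msgs_from_history m (t : 'I_n) (x y : outcome) :
  history t x = history t y -> msgs_from m x = msgs_from m y.
Proof. by move=> /history_eq [e1 _]; rewrite /msgs_from e1. Qed.

Lemma layer_outE j t (q : 'I_Q) (x : outcome) :
  (q < tail_max j (x.2 t))%N -> layer_out j t q x = Some (layer_in t q x).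
Proof. by move=> qx; rewrite /layer_out ffunE qx. Qed.

Lemma layer_outN j t (q : 'I_Q) (x : outcome) :
  ~~ (q < tail_max j (x.2 t))%N -> layer_out j t q x = None.
Proof. by move=> qx; rewrite /layer_out ffunE (negbTE qx). Qed.

Definition state_swap (t : 'I_n) (a b : state K Q) (x : outcome) : outcome :=
  (x.1, [ffun i => if i == t then tperm a b (x.2 t) else x.2 i]).

Lemma state_swapK t a b : involutive (state_swap t a b).
Proof.
case=> w s; congr pair; apply/ffunP => i; rewrite !ffunE eqxx tpermK.
by case: eqP => [->|].
Qed.

Lemma state_swap_eq t a b x : (state_at t (state_swap t a b x) == b) = (state_at t x == a).
Proof. by rewrite /state_at /= ffunE eqxx tperm_eqR. Qed.

Lemma history_state_swap t a b x : history t (state_swap t a b x) = history t x.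
Proof.
congr pair; apply/ffunP => i; rewrite !ffunE.
by case: ifP => // it; case: eqP => // e; move: it; rewrite e ltnn.
Qed.

Lemma mu_state_swap t a b x : state_at t x = a -> P a * mu (state_swap t a b x) = P b * mu x.
Proof.
move=> xa; rewrite /mu /= (bigD1 t) //= [in RHS](bigD1 t) //= ffunE eqxx.
rewrite -[x.2 t]/(state_at t x) xa tpermL.
rewrite (eq_bigr (fun i => P (x.2 i))); last by move=> i /negbTE it; rewrite ffunE it.
ring.
Qed.

Definition tail_prob j (q : nat) := \sum_(N | (q < tail_max j N)%N) P N.

(* H(X_{t,q} | X_{t,<q}, virtual observations of receiver [j] before [t], messages from [m]) *)
Definition layer_entropy j m (t : 'I_n) (q : 'I_Q) :=
  centropy mu (layer_in t q)
    (pairf (prefix (layer_in t) q) (pairf (eobs_upto j t) (msgs_from m))).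

Lemma centropy_layer j m (t : 'I_n) (q : 'I_Q) :
  centropy mu (layer_out j t q)
    (pairf (prefix (layer_out j t) q) (pairf (state_at t) (pairf (eobs_upto j t) (msgs_from m))))
  = tail_prob j q * layer_entropy j m t q.
Proof.
apply: (@centropy_erasure _ _ mu mu_ge0 _ _ (state_at t) (history t) P hP1 (state_swap t)
          (fun a b => inv_inj (@state_swapK t a b)) (@state_swap_eq t)
          (@history_state_swap t) (@mu_state_swap t)
          _ _ _ _ _ _ _ _ (fun N : state K Q => (q < tail_max j N)%N)).
- by move=> x y e; rewrite /layer_in (xsym_history (leqnn t) e).
- move=> x y e; rewrite /pairf (eobs_upto_history j e) (msgs_from_history m e); congr pair.
  by apply/ffunP => i; rewrite !ffunE /layer_in (xsym_history (leqnn t) e).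
- move=> x qx y; rewrite /pairf => -[_ ey _ _].
  by rewrite !layer_outN //; rewrite /state_at in ey qx; rewrite ey.
- move=> x qx y; rewrite /pairf !xpair_eqE.
  case: (eqVneq (state_at t y) (state_at t x)) => [ey|]; last by rewrite /= andbF.
  rewrite /=; congr (_ && _); rewrite !prefix_eqE; apply: eq_forallb => q'.
  case: (ltnP q' q) => //= q'q; rewrite /state_at in ey qx.
  by rewrite !layer_outE // ?ey (ltn_trans q'q qx).
- move=> x qx y; rewrite /pairf !xpair_eqE.
  case: (eqVneq (state_at t y) (state_at t x)) => [ey|]; last by rewrite /= !andbF.
  rewrite /state_at in ey qx; rewrite !layer_outE ?ey //= andbA [in RHS]andbA.
  congr (_ && _ && _); rewrite !prefix_eqE; apply: eq_forallb => q'.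
  case: (ltnP q' q) => //= q'q.
  by rewrite !layer_outE // ?ey (ltn_trans q'q qx).
Qed.

Lemma eout_eqE j (t : 'I_n) (x y : outcome) :
  (eout j y t == eout j x t) = (prefix (layer_out j t) Q y == prefix (layer_out j t) Q x).
Proof.
rewrite prefix_eqE; apply/eqP/forallP => [E q|E].
  by rewrite ltn_ord /layer_out E /= eqxx.
by apply/ffunP => q; have := E q; rewrite ltn_ord /layer_out => /eqP.
Qed.

Lemma centropy_eobs j m : centropy mu (eobs_upto j n) (msgs_from m) =
  \sum_(t < n) (centropy mu (state_at t) (pairf (eobs_upto j t) (msgs_from m))
                + \sum_(q < Q) tail_prob j q * layer_entropy j m t q).
Proof.
rewrite /eobs_upto (centropy_prefix mu_ge0) //.
apply: eq_big => [t|t _]; first by rewrite ltn_ord.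
rewrite /eobs (centropy_chain mu_ge0); congr (_ + _).
rewrite (@eq_centropy _ _ mu _ _ _ _ _ _ (prefix (layer_out j t) Q)
          (pairf (state_at t) (pairf (prefix (eobs j) t) (msgs_from m)))) //; last first.
  by move=> x y; rewrite eout_eqE.
rewrite (centropy_prefix mu_ge0) //; apply: eq_big => [q|q _]; first by rewrite ltn_ord.
exact: centropy_layer.
Qed.

Lemma centropy_state j m (t : 'I_n) :
  centropy mu (state_at t) (pairf (eobs_upto j t) (msgs_from m))
  = \sum_x mu x * ln (P (state_at t x))^-1.
Proof.
apply: (@centropy_indep _ _ mu mu_ge0 _ _ (state_at t) (history t) P hP1 (state_swap t)
          (fun a b => inv_inj (@state_swapK t a b)) (@state_swap_eq t)
          (@history_state_swap t) (@mu_state_swap t)).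
by move=> x y e; rewrite /pairf (eobs_upto_history j e) (msgs_from_history m e).
Qed.

Lemma layer_entropy_mono j j' m m' t q :
  (j <= j')%N -> (m <= m')%N -> layer_entropy j m t q <= layer_entropy j' m' t q.
Proof.
move=> jj' mm'; apply: (centropy_le_coarser mu_ge0) => x y.
rewrite /pairf => -[e1 /ffunP e2 /ffunP e3]; congr (_, (_, _)) => //.
  apply/ffunP => i; rewrite !ffunE; case: ifP => // it.
  move: (e2 i); rewrite !ffunE it /eobs /pairf => -[/ffunP ey es]; rewrite es.
  congr (Some (_, _)); apply/ffunP => q'; rewrite !ffunE es; case: ifP => // q'y.
  have q'j : (q' < tail_max j (y.2 i))%N := leq_trans q'y (le_tail_max _ jj').
  by move: (ey q'); rewrite !ffunE es q'j => -[->].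
apply/ffunP => k; rewrite !ffunE; case: ifP => // m'k.
by move: (e3 k); rewrite !ffunE (leq_trans mm' m'k).
Qed.

Lemma layer_entropy_ge0 j m t q : 0 <= layer_entropy j m t q.
Proof. exact: (centropy_ge0 mu_ge0). Qed.

Lemma layer_entropy_le j m t q : layer_entropy j m t q <= ln #|F|%:R.
Proof. by apply: le_trans (centropy_le_ln_card mu_ge0 _ _) _; rewrite mu_sum mul1r. Qed.

Section Message.
Variable j : 'I_K.
Let k0 := pi j.

Definition msg (x : outcome) : 'I_(M k0) := x.1 k0.

Definition msg_swap (a b : 'I_(M k0)) (w : msgs M) : msgs M :=
  [ffun k => if k == k0 then insubd (w k) (val (tperm a b (insubd a (val (w k))))) else w k].

Lemma msg_swap_k0 a b w : msg_swap a b w k0 = tperm a b (w k0).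
Proof. by apply: val_inj; rewrite ffunE eqxx val_insubd ltn_ord valKd. Qed.

Lemma msg_swap_neq a b w k : k != k0 -> msg_swap a b w k = w k.
Proof. by rewrite ffunE => /negbTE ->. Qed.

Definition msg_swap_outcome (a b : 'I_(M k0)) (x : outcome) : outcome :=
  (msg_swap a b x.1, x.2).

Lemma msg_swap_outcomeK a b : involutive (msg_swap_outcome a b).
Proof.
case=> w s; congr pair; apply/ffunP => k /=.
by case: (eqVneq k k0) => [->|k_neq]; rewrite ?msg_swap_k0 ?tpermK // !msg_swap_neq.
Qed.

Lemma msg_swap_eq a b x : (msg (msg_swap_outcome a b x) == b) = (msg x == a).
Proof. by rewrite /msg msg_swap_k0 tperm_eqR. Qed.

Lemma msgs_from_msg_swap a b x : msgs_from j.+1 (msg_swap_outcome a b x) = msgs_from j.+1 x.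
Proof.
apply/ffunP => k; rewrite !ffunE /=; case: ifP => // jk; rewrite ifN //.
by apply: (contraTneq _ jk) => /perm_inj ->; rewrite ltnn.
Qed.

Definition msg_law (a : 'I_(M k0)) : R := ((M k0)%:R)^-1.

Lemma msg_law_sum : \sum_a msg_law a = 1.
Proof. by rewrite /msg_law sumr_const card_ord -[_ *+ _]mulr_natl mulfV // pnatr_eq0 -lt0n M_gt0. Qed.

Lemma centropy_msg : centropy mu msg (msgs_from j.+1) = ln (M k0)%:R.
Proof.
rewrite (@centropy_indep _ _ mu mu_ge0 _ _ msg (msgs_from j.+1) msg_law msg_law_sum
   msg_swap_outcome (fun a b => inv_inj (@msg_swap_outcomeK a b)) msg_swap_eq
   msgs_from_msg_swap (fun _ _ _ _ => erefl)) //.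
by rewrite /msg_law invrK -big_distrl /= mu_sum mul1r.
Qed.

Definition decoded (x : outcome) : 'I_(M k0) := dec c k0 (rx c x.1 x.2 k0) x.2.
Definition decoding_error (x : outcome) := decoded x != msg x.
Definition perr := \sum_x mu x * (decoding_error x)%:R.

Lemma decoded_eobs x y : eobs_upto j n x = eobs_upto j n y -> decoded x = decoded y.
Proof.
move=> /ffunP exy.
have [ey es] : (forall t, eout j x t = eout j y t) /\ x.2 = y.2.
  suff e t : eout j x t = eout j y t /\ x.2 t = y.2 t.
    by split=> [t|]; [case: (e t) | apply/ffunP => t; case: (e t)].
  by move: (exy t); rewrite !ffunE ltn_ord /eobs /pairf => -[-> ->].
rewrite /decoded; congr (dec c k0 _ _) => //.
apply/ffunP => t; rewrite !ffunE; apply/ffunP => q; rewrite !ffunE -es.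
case: ifP => // qk0.
have qj : (q < tail_max j (x.2 t))%N by apply: leq_trans qk0 (tail_max_ge _ (leqnn j)).
by move/ffunP: (ey t) => /(_ q); rewrite !ffunE /xsym -es qj => -[->].
Qed.

Lemma fano : centropy mu msg (pairf (eobs_upto j n) (msgs_from j.+1))
             <= ln 2 + perr * ln (M k0)%:R.
Proof.
apply: le_trans (@centropy_le_coarser _ _ mu mu_ge0 _ _ _ msg _ decoded _) _.
  by move=> x y [exy _]; apply: decoded_eobs.
have -> : centropy mu msg decoded = centropy mu (pairf msg decoding_error) decoded.
  apply: eq_centropy => // x y; rewrite /pairf xpair_eqE.
  case: (eqVneq (msg y) (msg x)) => [ew|] //=.
  case: (eqVneq (decoded y) (decoded x)) => [ed|] /=; last by rewrite andbF.
  by rewrite /decoding_error ew ed !eqxx.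
rewrite (centropy_chain mu_ge0); apply: lerD.
  by have := centropy_le_ln_card mu_ge0 decoding_error decoded; rewrite mu_sum mul1r card_bool.
rewrite /centropy (bigID decoding_error) /= [X in _ + X]big1 ?addr0; last first.
  move=> x /negPn /eqP xdec; have [->|mp] := mu_eq0_or_gt0 mu_ge0 x; first by rewrite mul0r.
  rewrite (_ : fibre_mass mu (pairf msg (pairf decoding_error decoded)) x
             = fibre_mass mu (pairf decoding_error decoded) x).
    by rewrite divff ?ln1 ?mulr0 // gt_eqF // (fibre_mass_gt0 mu_ge0 _ mp).
  apply: eq_fibre_mass => y; rewrite /pairf !xpair_eqE.
  case: (eqVneq (decoding_error y) (decoding_error x)) => [ee|]; last by rewrite andbF.
  case: (eqVneq (decoded y) (decoded x)) => [ed|]; last by rewrite !andbF.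
  have ydec : decoded y = msg y by move: ee; rewrite /decoding_error xdec eqxx => /negPn /eqP.
  by rewrite -xdec -ydec ed eqxx.
have -> : perr = \sum_(x | decoding_error x) mu x.
  rewrite /perr [RHS]big_mkcond; apply: eq_bigr => x _.
  by case: (decoding_error x); rewrite ?mulr1 ?mulr0.
have := @partial_centropy_le_ln_card _ _ mu mu_ge0 _ _ msg
  (pairf decoding_error decoded) decoding_error.
by rewrite card_ord => /(_ (fun x y e => congr1 fst e)).
Qed.

Lemma perr_le : perr <= err_prob P c.
Proof.
rewrite err_probE; apply: ler_sum => x _; apply: ler_wpM2l; first exact: mu_ge0.
case E: (decoding_error x) => //; rewrite ler_nat; case: existsP => // -[]; exists k0.
by move: E; rewrite /decoding_error /decoded /msg.
Qed.

Lemma msgs_from_eqE (x y : outcome) :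
  (msgs_from j y == msgs_from j x) = (msg y == msg x) && (msgs_from j.+1 y == msgs_from j.+1 x).
Proof.
apply/eqP/andP => [/ffunP E|[/eqP E1 /eqP /ffunP E2]].
  split.
    by move: (E j); rewrite !ffunE leqnn /msg => /val_inj ->.
  by apply/eqP/ffunP => k; rewrite !ffunE; case: ifP => // jk; move: (E k); rewrite !ffunE ltnW.
apply/ffunP => k; rewrite !ffunE; case: ifP => // jk.
rewrite leq_eqVlt in jk; case/orP: jk => [/eqP e|jk].
  have -> : k = j by apply: val_inj; exact: esym e.
  by move: E1; rewrite /msg => ->.
by move: (E2 k); rewrite !ffunE jk.
Qed.

(* I(W_{pi j}; eobs | V_{j+1}) computed twice: by the chain rule and by Fano. *)
Lemma info_gain_ge :
  (1 - perr) * ln (M k0)%:R - ln 2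
  <= centropy mu (eobs_upto j n) (msgs_from j.+1) - centropy mu (eobs_upto j n) (msgs_from j).
Proof.
have c1 := centropy_chain mu_ge0 msg (eobs_upto j n) (msgs_from j.+1).
have c2 := centropy_chain mu_ge0 (eobs_upto j n) msg (msgs_from j.+1).
have e1 : centropy mu (pairf msg (eobs_upto j n)) (msgs_from j.+1)
          = centropy mu (pairf (eobs_upto j n) msg) (msgs_from j.+1).
  by apply: eq_centropy => // x y; rewrite /pairf !xpair_eqE (andbC (msg y == msg x)).
have e2 : centropy mu (eobs_upto j n) (pairf msg (msgs_from j.+1))
          = centropy mu (eobs_upto j n) (msgs_from j).
  by apply: eq_centropy => x y; rewrite msgs_from_eqE /pairf xpair_eqE.
have := fano; have := centropy_msg; rewrite -e2; lra.
Qed.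

End Message.

Lemma info_gain_layers (j : nat) :
  centropy mu (eobs_upto j n) (msgs_from j.+1) - centropy mu (eobs_upto j n) (msgs_from j)
  = \sum_(t < n) \sum_(q < Q) tail_prob j q * (layer_entropy j j.+1 t q - layer_entropy j j t q).
Proof.
rewrite !centropy_eobs -sumrB; apply: eq_bigr => t _.
rewrite !centropy_state opprD addrACA subrr add0r -sumrB.
by apply: eq_bigr => q _; rewrite mulrBr.
Qed.

Lemma weighted_rate_le (omega : 'I_K -> R) : (forall k, 0 <= omega k) ->
  \sum_(j < K) omega (pi j) * ((1 - perr j) * ln (M (pi j))%:R - ln 2)
  <= n%:R * (ln #|F|%:R * \sum_(q < Q) \big[Num.max/0]_(k < K) (omega (pi k) * tail_prob k q)).
Proof.
move=> omega0.
apply: le_trans (_ : \sum_(j < K) omega (pi j) * (centropy mu (eobs_upto j n) (msgs_from j.+1)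
          - centropy mu (eobs_upto j n) (msgs_from j)) <= _).
  by apply: ler_sum => j _; apply: ler_wpM2l => //; exact: info_gain_ge.
under eq_bigr do rewrite info_gain_layers big_distrr /=.
rewrite exchange_big /=.
set bound := ln #|F|%:R * _.
have -> : n%:R * bound = \sum_(t < n) bound by rewrite sumr_const card_ord mulr_natl.
apply: ler_sum => t _; under eq_bigr do rewrite big_distrr /=.
rewrite /bound exchange_big /= big_distrr /=; apply: ler_sum => q _.
under eq_bigr do rewrite mulrA.
rewrite mulrC; apply: (@weighted_increments_le_bigmax _ K
  (fun k => omega (pi k) * tail_prob k q)
  (fun i => layer_entropy i i t q) (fun i => layer_entropy i i.+1 t q)).
- by move=> k; apply: mulr_ge0 => //; apply: sumr_ge0.
- by apply: ln_ge0; rewrite ler1n; apply/card_gt0P; exists 0.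
- exact: layer_entropy_ge0.
- exact: layer_entropy_ge0.
- by move=> k; apply: layer_entropy_mono.
- by move=> k; apply: layer_entropy_mono.
- by move=> k; apply: layer_entropy_le.
Qed.

End Channel.

(** * Asymptotics *)

Lemma msize_gt0 (R : realType) (F : finFieldType) n (r : R) : (0 < msize F n r)%N.
Proof. by rewrite /msize leq_max. Qed.

(* [msize] loses at most a factor 2 to the truncation. *)
Lemma ln_msize_ge (R : realType) (F : finFieldType) n (r : R) :
  n%:R * r * ln (#|F|%:R : R) - ln 2 <= ln (msize F n r)%:R.
Proof.
set x : R := (#|F|%:R : R) `^ (n%:R * r).
have xp : 0 < x by apply: powR_gt0; rewrite ltr0n; apply/card_gt0P; exists 0.
have mp : (0 : R) < (msize F n r)%:R by rewrite ltr0n msize_gt0.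
have half_lt : x / 2 < (msize F n r)%:R.
  rewrite /msize -/x; set t := Num.truncn x.
  have h1 : x < t.+1%:R by exact: truncnS_gt.
  have h2 : (t.+1 <= 2 * maxn 1 t)%N.
    by case: t {h1} => [|t] //; rewrite (maxn_idPr _) // mul2n -addnn -{1}[t.+1]addn0 ltn_add2l.
  by rewrite ltr_pdivrMr // (lt_le_trans h1) // -natrM mulnC ler_nat.
move: half_lt; rewrite -ltr_ln ?posrE ?divr_gt0 // ln_div ?posrE // /x ln_powR.
exact: ltW.
Qed.

Lemma tail_prob_eq (R : realType) K Q (P : state K Q -> R) (pi : {perm 'I_K}) (k : 'I_K) q :
  tail_prob P pi k q = prob_tail_max P pi k q.+1.
Proof. by apply: eq_bigl => N; rewrite tail_max_gt. Qed.

Lemma code_rate_bound (R : realType) (F : finFieldType) (K Q : nat) (P : state K Q -> R)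
    (hP0 : forall N, 0 <= P N) (hP1 : \sum_N P N = 1) (rate omega : 'I_K -> R)
    (omega0 : forall k, 0 <= omega k) (pi : {perm 'I_K}) (n : nat)
    (c : Defs.code F Q n (fun k => msize F n (rate k))) (eps : R) :
  0 <= eps -> eps <= 1 -> err_prob P c <= eps ->
  (1 - eps) * (\sum_k omega k * rate k) * (n%:R * ln #|F|%:R)
  <= (\sum_(q < Q) \big[Num.max/0]_(k < K) (omega (pi k) * prob_tail_max P pi k q.+1))
       * (n%:R * ln #|F|%:R) + 2 * ln 2 * \sum_k omega k.
Proof.
move=> eps0 eps1 err_le.
set B := \sum_(q < Q) _; set lam : R := ln #|F|%:R.
have l2 : 0 <= ln (2 : R) by apply: ln_ge0; rewrite ler1n.
have := weighted_rate_le hP0 hP1 pi c (fun k => msize_gt0 F n (rate k)) omega0.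
have -> : \sum_(q < Q) \big[Num.max/0]_(k < K) (omega (pi k) * tail_prob P pi k q) = B.
  by apply: eq_bigr => q _; apply: eq_bigr => k _; rewrite tail_prob_eq.
rewrite -/lam [\sum_k omega k * rate k](reindex_inj (@perm_inj _ pi)).
rewrite [\sum_k omega k](reindex_inj (@perm_inj _ pi)) /=; set W := \sum_j omega (pi j).
have W0 : 0 <= W by apply: sumr_ge0.
have user_bound (j : 'I_K) :
    omega (pi j) * ((1 - eps) * (n%:R * rate (pi j) * lam - ln 2) - ln 2)
    <= omega (pi j) * ((1 - perr P pi c j) * ln (msize F n (rate (pi j)))%:R - ln 2).
  apply: ler_wpM2l => //; rewrite lerD2r.
  have perr_eps : perr P pi c j <= eps := le_trans (perr_le hP0 pi c j) err_le.
  apply: le_trans (_ : (1 - eps) * ln (msize F n (rate (pi j)))%:R <= _).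
    by apply: ler_wpM2l; [rewrite subr_ge0 | exact: ln_msize_ge].
  by apply: ler_wpM2r; [apply: ln_ge0; rewrite ler1n msize_gt0 | rewrite lerB].
move/(le_trans (ler_sum _ (fun j _ => user_bound j))).
have -> : \sum_j omega (pi j) * ((1 - eps) * (n%:R * rate (pi j) * lam - ln 2) - ln 2)
   = (1 - eps) * (\sum_j omega (pi j) * rate (pi j)) * (n%:R * lam)
     - ((1 - eps) * ln 2 + ln 2) * W.
  rewrite /W [(1 - eps) * _ * _]mulrAC !mulr_sumr -sumrB.
  by apply: eq_bigr => j _; ring.
have : ((1 - eps) * ln 2 + ln 2) * W <= 2 * ln 2 * W.
  apply: ler_wpM2r => //.
  have : (1 - eps) * ln (2 : R) <= ln 2 by rewrite ler_piMl // lerBlDr lerDl.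
  lra.
rewrite (_ : B * (n%:R * lam) = n%:R * (lam * B)); last by ring.
move: ((1 - eps) * _ * _) (n%:R * (lam * B)) (((1 - eps) * ln 2 + ln 2) * W) (2 * ln 2 * W).
by move=> lhs rhs z1 z2; lra.
Qed.

Lemma le_of_rate_bounds (R : realType) (S B C lam : R) :
  0 < lam -> 0 <= B -> 0 <= C ->
  (forall eps, 0 < eps -> eps <= 1 -> exists N0 : nat, forall n, (N0 <= n)%N ->
     (1 - eps) * S * (n%:R * lam) <= B * (n%:R * lam) + C) ->
  S <= B.
Proof.
move=> lam0 B0 C0 bounds; rewrite leNgt; apply/negP => BS.
set d := S - B; have d0 : 0 < d by rewrite subr_gt0.
have S0 : 0 < S by apply: le_lt_trans B0 BS.
set eps := d / (2 * S).
have eps0 : 0 < eps by rewrite divr_gt0 // mulr_gt0.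
have eps1 : eps <= 1 by rewrite ler_pdivrMr ?mulr_gt0 // mul1r /d; lra.
have [N0 hN0] := bounds eps eps0 eps1.
(* with [eps = d / 2S] the bound reads [d n lam / 2 <= C], false for [n > 2C / (d lam)] *)
set n := maxn N0 (Num.truncn (2 * C / (d * lam))).+1.
have := hN0 n (leq_maxl _ _).
have n_gt : 2 * C < n%:R * (d * lam).
  rewrite -ltr_pdivrMr ?mulr_gt0 //; apply: lt_le_trans (truncnS_gt _) _.
  by rewrite ler_nat leq_maxr.
have -> : (1 - eps) * S * (n%:R * lam) = B * (n%:R * lam) + n%:R * (d * lam) / 2.
  by rewrite /eps /d; field; rewrite gt_eqF.
move: n_gt; set Y := n%:R * (d * lam); set X := B * _; lra.
Qed.

Theorem theorem1 (R : realType) (F : finFieldType) (K Q : nat)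
  (hK : (2 <= K)%N) (hQ : (1 <= Q)%N)
  (P : state K Q -> R)
  (hP0 : forall N, 0 <= P N) (hP1 : \sum_(N : state K Q) P N = 1)
  (rate : 'I_K -> R) (hach : achievable F P rate)
  (omega : 'I_K -> R) (homega : forall k, 0 <= omega k)
  (pi : {perm 'I_K}) :
  \sum_(k < K) omega k * rate k <=
  \sum_(q < Q) \big[Num.max/0]_(k < K)
      (omega (pi k) * prob_tail_max P pi k q.+1).
Proof.
apply: (@le_of_rate_bounds _ _ _ (2 * ln 2 * \sum_k omega k) (ln #|F|%:R)).
- by apply: ln_gt0; rewrite ltr1n; exact: card_finNzRing_gt1.
- by apply: sumr_ge0 => q _; exact: bigmax_ge_id.
- by rewrite !mulr_ge0 ?sumr_ge0 // ln_ge0 // ler1n.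
move=> eps eps0 eps1; have [N0 hN0] := hach eps eps0.
by exists N0 => n /hN0 [c err_le]; exact: code_rate_bound (ltW eps0) eps1 err_le.
Qed.
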